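(* Let $(P,\leq,{}',R,0,1)$ be a conditionally operator residuated poset satisfying operator divisibility, and assume $R(x,y)=LU(x',y)$ for all $x,y\in P$. Then $(P,\leq,{}',0,1)$ is a generalized orthomodular poset.
   Context: For a poset $(P,\leq)$ and $A\subseteq P$: $L(A):=\{x\in P\mid x\leq a\text{ for all }a\in A\}$, $U(A):=\{x\in P\mid a\leq x\text{ for all }a\in A\}$; $L(a,b)$ means $L(\{a,b\})$, $L(a,B)$ means $L(\{a\}\cup B)$, $LU(A)=L(U(A))$. An orthoposet is a bounded poset $(P,\leq,{}',0,1)$ with a unary operation $'$ that is an antitone involution ($x''=x$, and $x\leq y\Rightarrow y'\leq x'$) and a complementation ($L(x,x')=\{0\}$, $U(x,x')=\{1\}$). A generalized orthomodular poset is an orthoposet satisfying: for all $x,y$, $x\leq y$ implies $U(y)=U(x,L(x',y))$. A conditionally operator residuated poset is a tuple $(P,\leq,{}',R,0,1)$ where $(P,\leq,0,1)$ is a bounded poset, $'$ is an antitone unary operation ($x\leq y\Rightarrow y'\leq x'$), and $R:P^2\to 2^P$ satisfies for all $x,y,z\in P$: (i) if $x'\leq y$ then $L(x,y)\subseteq L(z)$ implies $L(x)\subseteq R(y,z)$; (ii) if $z\leq y$ then $L(x)\subseteq R(y,z)$ implies $L(x,y)\subseteq L(z)$; (iii) $R(x,0)=L(x')$; (iv) $R(x'',x)=P$. It satisfies operator divisibility if $x\leq y$ implies $L(y,U(R(y,x)))=L(x)$. *)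

From HB Require Import structures.
From mathcomp Require Import all_boot all_order.
Set Implicit Arguments. Unset Strict Implicit. Unset Printing Implicit Defensive.
Import Order.TTheory.
Local Open Scope order_scope.

Section PosetDefs.
Context {d : Order.disp_t} {P : tbPOrderType d}.

Definition pset := P -> Prop.
Definition psubset (A B : pset) : Prop := forall x, A x -> B x.
Definition pseteq (A B : pset) : Prop := forall x, A x <-> B x.
Definition pfull : pset := fun _ => True.
Definition psingle (a : P) : pset := fun z => z = a.
Definition ppair (a b : P) : pset := fun z => z = a \/ z = b.
Definition paddpt (a : P) (B : pset) : pset := fun z => z = a \/ B z.

Definition Lc (A : pset) : pset := fun x => forall a, A a -> x <= a.
Definition Uc (A : pset) : pset := fun x => forall a, A a -> a <= x.

Definition antitone (c : P -> P) : Prop := forall x y, x <= y -> c y <= c x.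

Definition orthoposet (c : P -> P) : Prop :=
  antitone c /\
  (forall x, c (c x) = x) /\
  (forall x, pseteq (Lc (ppair x (c x))) (psingle \bot)) /\
  (forall x, pseteq (Uc (ppair x (c x))) (psingle \top)).

Definition gen_orthomodular (c : P -> P) : Prop :=
  orthoposet c /\
  (forall x y, x <= y ->
     pseteq (Uc (psingle y)) (Uc (paddpt x (Lc (ppair (c x) y))))).

Definition cond_op_residuated (c : P -> P) (R : P -> P -> pset) : Prop :=
  antitone c /\
  (forall x y z, c x <= y ->
     psubset (Lc (ppair x y)) (Lc (psingle z)) -> psubset (Lc (psingle x)) (R y z)) /\
  (forall x y z, z <= y ->
     psubset (Lc (psingle x)) (R y z) -> psubset (Lc (ppair x y)) (Lc (psingle z))) /\
  (forall x, pseteq (R x \bot) (Lc (psingle (c x)))) /\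
  (forall x, pseteq (R (c (c x)) x) pfull).

Definition op_divisibility (R : P -> P -> pset) : Prop :=
  forall x y, x <= y ->
    pseteq (Lc (paddpt y (Uc (R y x)))) (Lc (psingle x)).

End PosetDefs.

From mathcomp Require Import all_boot all_order.
Import Order.TTheory.
Local Open Scope order_scope.

(* The proof derives the orthoposet axioms
   and the generalized orthomodular law one at a time:
   - divisibility at 0 <= x, together with R(x,0) = L(x'), shows that every
     common lower bound of x and x' is 0;
   - residuation (i) with y = x', z = 0 then gives x <= x'', and divisibility
     at x <= x'' with R(x'',x) = P gives x'' <= x, so ' is an involution;
   - R(x'',x) = P together with R(x'',x) = LU(x',x) shows that every common
     upper bound of x and x' is 1;
   - for x <= y, an upper bound z of x and L(x',y) satisfies z' <= y'
     by divisibility at y' <= x', since R(x',y') = LU(x,y') is bounded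
     below by the complement of every upper bound of x and y'. *)

Section GeneralizedOrthomodular.

Context {d : Order.disp_t} {P : tbPOrderType d}.
Variables (c : P -> P) (R : P -> P -> P -> Prop).

Hypothesis c_antitone : antitone c.
Hypothesis R_residuation : forall x y z, c x <= y ->
  psubset (Lc (ppair x y)) (Lc (psingle z)) -> psubset (Lc (psingle x)) (R y z).
Hypothesis R_bot : forall x, pseteq (R x \bot) (Lc (psingle (c x))).
Hypothesis R_full : forall x, pseteq (R (c (c x)) x) pfull.
Hypothesis R_divisible : op_divisibility R.
Hypothesis R_LU : forall x y, pseteq (R x y) (Lc (Uc (ppair (c x) y))).

Lemma divisibility_le x y w : x <= y -> w <= y ->
  (forall a, Uc (R y x) a -> w <= a) -> w <= x.
Proof.
move=> xy wy wU.
by apply: ((R_divisible _ _ xy w).1 _ _ erefl) => a [->|/wU].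
Qed.

(* Both c x and y belong to R(x,y) = LU(x',y); hence every upper bound of
   R(x,y) lies above c x and above y. *)
Lemma upper_R_ge_compl x y a : Uc (R x y) a -> c x <= a.
Proof. by move=> Ua; apply: Ua; apply: (R_LU x y (c x)).2 => u; apply; left. Qed.

Lemma upper_R_ge_right x y a : Uc (R x y) a -> y <= a.
Proof. by move=> Ua; apply: Ua; apply: (R_LU x y y).2 => u; apply; right. Qed.

Lemma common_lower_compl_bot x w : w <= x -> w <= c x -> w <= \bot.
Proof.
move=> wx wcx; apply: divisibility_le (le0x x) wx _ => a Ua.
have cx_in_R : R x \bot (c x) by apply: (R_bot x (c x)).2 => b ->.
exact: le_trans wcx (Ua _ cx_in_R).
Qed.

(* Residuation (i) at y = x', z = 0 puts x into R(x',0) = L(x''). *)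
Lemma le_compl_compl x : x <= c (c x).
Proof.
have xL : psubset (Lc (psingle x)) (R (c x) \bot).
  apply: R_residuation => // w Lw b ->.
  exact: common_lower_compl_bot (Lw x (or_introl erefl)) (Lw _ (or_intror erefl)).
by apply: (R_bot (c x) x).1 (xL x _) _ erefl => b ->.
Qed.

(* Divisibility at x <= x'', where R(x'',x) = P bounds every upper bound of
   R(x'',x) below by x''. *)
Lemma compl_involutive x : c (c x) = x.
Proof.
apply/le_anti; rewrite le_compl_compl andbT.
apply: divisibility_le (le_compl_compl x) (lexx _) _ => a Ua.
exact: Ua _ ((R_full x _).2 I).
Qed.

Lemma compl_le x y : (c y <= c x) = (x <= y).
Proof.
apply/idP/idP => [|/c_antitone //].
by move/c_antitone; rewrite !compl_involutive.
Qed.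

Lemma common_upper_compl_top x z : x <= z -> c x <= z -> z = \top.
Proof.
move=> xz cxz; apply/le_anti; rewrite lex1 /=.
have top_in_LU := (R_LU (c (c x)) x \top).1 ((R_full x \top).2 I).
by apply: top_in_LU => b; rewrite compl_involutive => -[->|->].
Qed.

Lemma orthoposet_c : orthoposet c.
Proof.
split; [done | split; [exact: compl_involutive | split]] => x z; split.
- move=> Lz; apply/le_anti; rewrite le0x andbT.
  exact: common_lower_compl_bot (Lz x (or_introl erefl)) (Lz _ (or_intror erefl)).
- by move=> -> b _; exact: le0x.
- move=> Uz.
  exact: common_upper_compl_top (Uz x (or_introl erefl)) (Uz _ (or_intror erefl)).
- by move=> -> b _; exact: lex1.
Qed.

Lemma orthomodular_law x y : x <= y ->
  pseteq (Uc (psingle y)) (Uc (paddpt x (Lc (ppair (c x) y)))).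
Proof.
move=> xy z; split.
- move=> Uz b [->|Lb]; first exact: le_trans xy (Uz y erefl).
  exact: le_trans (Lb y (or_intror erefl)) (Uz y erefl).
- move=> Uz b ->.
  have xz : x <= z by apply: Uz; left.
  rewrite -compl_le; apply: (@divisibility_le _ (c x)); rewrite ?compl_le // => a Ua.
  rewrite -(compl_involutive a) compl_le; apply: Uz; right => w [->|->].
  + by rewrite compl_le -[x]compl_involutive; apply: upper_R_ge_compl Ua.
  + by rewrite -[y]compl_involutive compl_le; apply: upper_R_ge_right Ua.
Qed.

End GeneralizedOrthomodular.

Theorem mainTheorem2 (d : Order.disp_t) (P : tbPOrderType d)
  (c : P -> P) (R : P -> P -> P -> Prop) :
  cond_op_residuated c R ->
  op_divisibility R ->
  (forall x y, pseteq (R x y) (Lc (Uc (ppair (c x) y)))) ->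
  gen_orthomodular c.
Proof.
move=> [c_anti [R_res [_ [R_bot R_full]]]] R_div R_LU.
split; first exact: (orthoposet_c c R c_anti R_res R_bot R_full R_div R_LU).
exact: (orthomodular_law c R c_anti R_res R_bot R_full R_div R_LU).
Qed.
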